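(* Let $0<r\le1$, $0<s,w<1$ and $0\le\rho,\delta\le1$. Let $a\in S^m_{\rho,\delta,0,2}(\mathbb{T}\times\mathbb{Z})$. If $m<-\frac1r-w-2\delta$, then $T_a:\Lambda^s(\mathbb{T})\to\Lambda^w(\mathbb{T})$ is an $r$-nuclear operator.
   Context: $\widehat f(\xi)=\int_{\mathbb{T}}e^{-i2\pi x\xi}f(x)dx$, $\langle\xi\rangle=(1+|\xi|^2)^{1/2}$. $S^m_{\rho,\delta,0,2}(\mathbb{T}\times\mathbb{Z})$: functions $a(x,\xi)$ smooth in $x\in\mathbb{T}$ for each $\xi\in\mathbb{Z}$ with $|\partial_x^\beta a(x,\xi)|\le C_\beta\langle\xi\rangle^{m+\delta\beta}$ for $0\le\beta\le2$. $T_au(x)=\sum_{\xi\in\mathbb{Z}}e^{i2\pi x\xi}a(x,\xi)\widehat u(\xi)$. For $0<s<1$, $\Lambda^s(\mathbb{T})$ is the Hölder space with norm $\|f\|_{\Lambda^s}=\sup_{x,h\in\mathbb{T}}|f(x+h)-f(x)||h|^{-s}+\sup_{x\in\mathbb{T}}|f(x)|$ (identified in the paper with the Besov space $B^s_{\infty,\infty}(\mathbb{T})$). $T:E\to F$ is $r$-nuclear if $T=\sum_ne'_n(\cdot)y_n$ with $e'_n\in E'$, $y_n\in F$, $\sum_n\|e'_n\|^r_{E'}\|y_n\|^r_F<\infty$. *)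

From Stdlib Require Import Reals.
From Coquelicot Require Import Coquelicot.
Open Scope R_scope.

(* Functions on the torus T = R/Z are 1-periodic functions R -> C. *)
Definition periodic1 (f : R -> C) : Prop := forall x, f (x + 1) = f x.

Definition rpow (x p : R) : R := if Rle_dec x 0 then 0 else Rpower x p.

Definition japan (xi : Z) : R := sqrt (1 + (IZR xi) ^ 2).

Definition cexp2pi (t : R) : C := (cos (2 * PI * t), sin (2 * PI * t)).

Definition fourier (f : R -> C) (xi : Z) : C :=
  RInt (V := C_R_CompleteNormedModule)
    (fun x => Cmult (cexp2pi (- x * IZR xi)) (f x)) 0 1.

Definition zsum (g : Z -> C) : C :=
  (Series (fun n => Re (g (Z.of_nat n))) + Series (fun n => Re (g (- Z.of_nat (S n))%Z)),
   Series (fun n => Im (g (Z.of_nat n))) + Series (fun n => Im (g (- Z.of_nat (S n))%Z))).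

(* Hölder space Lambda^s(T), 0<s<1:
   ||f|| = sup_{x,h} |f(x+h)-f(x)| |h|^{-s} + sup_x |f(x)|
   (|h| is the distance of h to 0 in T; taking h over all nonzero reals
   gives the same supremum for 1-periodic f). *)
Definition holder_semi (s : R) (f : R -> C) : Rbar :=
  Lub_Rbar (fun t => exists x h, h <> 0 /\
              t = Cmod (Cminus (f (x + h)) (f x)) / Rpower (Rabs h) s).
Definition sup_norm (f : R -> C) : Rbar :=
  Lub_Rbar (fun t => exists x, t = Cmod (f x)).
Definition in_holder (s : R) (f : R -> C) : Prop :=
  periodic1 f /\ is_finite (holder_semi s f) /\ is_finite (sup_norm f).
Definition holder_norm (s : R) (f : R -> C) : R :=
  real (holder_semi s f) + real (sup_norm f).

Definition dual_norm (s : R) (e : (R -> C) -> C) : Rbar :=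
  Lub_Rbar (fun t => exists u, in_holder s u /\ holder_norm s u <= 1 /\ t = Cmod (e u)).
Definition in_dual (s : R) (e : (R -> C) -> C) : Prop :=
  (forall u v, in_holder s u -> in_holder s v ->
     e (fun x => Cplus (u x) (v x)) = Cplus (e u) (e v)) /\
  (forall (c : C) u, in_holder s u -> e (fun x => Cmult c (u x)) = Cmult c (e u)) /\
  is_finite (dual_norm s e).

Definition r_nuclear (r s w : R) (T : (R -> C) -> (R -> C)) : Prop :=
  (forall u, in_holder s u -> in_holder w (T u)) /\
  exists (e : nat -> ((R -> C) -> C)) (y : nat -> (R -> C)),
    (forall n, in_dual s (e n)) /\ (forall n, in_holder w (y n)) /\
    ex_series (fun n => rpow (real (dual_norm s (e n))) r * rpow (holder_norm w (y n)) r) /\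
    (forall u, in_holder s u ->
       is_lim_seq (fun N => holder_norm w (fun x =>
          Cminus (T u x) (sum_n (G := C_AbelianMonoid) (fun n => Cmult (e n u) (y n x)) N))) 0).

Definition cderiv_n (k : nat) (f : R -> C) (x : R) : C :=
  (Derive_n (fun t => Re (f t)) k x, Derive_n (fun t => Im (f t)) k x).

Definition symbol_class (m rho delta : R) (a : R -> Z -> C) : Prop :=
  (forall xi x, a (x + 1) xi = a x xi) /\
  (forall xi k x, ex_derive_n (fun t => Re (a t xi)) k x /\
                  ex_derive_n (fun t => Im (a t xi)) k x) /\
  (forall beta : nat, (beta <= 2)%nat -> exists C_beta : R,
     forall x xi, Cmod (cderiv_n beta (fun t => a t xi) x)
                  <= C_beta * Rpower (japan xi) (m + delta * INR beta)).

Definition Top (a : R -> Z -> C) (u : R -> C) : R -> C :=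
  fun x => zsum (fun xi => Cmult (Cmult (cexp2pi (x * IZR xi)) (a x xi)) (fourier u xi)).

(* T_a u = sum_xi u^(xi) y_xi with y_xi(x) = e^{2 pi i x xi} a(x, xi) is the nuclear decomposition.
   Each functional u |-> u^(xi) has norm at most 1 on Lambda^s, since |u^(xi)| <= sup |u|.
   The symbol bounds give |y_xi| <~ <xi>^m and, because delta <= 1, |y_xi'| <~ <xi>^(m+1);
   interpolating, min(<xi>^m, <xi>^(m+1) |h|) <= <xi>^(m+w) |h|^w, so
   ||y_xi||_{Lambda^w} <~ <xi>^(m+w).
   Hence sum_xi ||u^(xi)||^r ||y_xi||^r <~ sum_xi <xi>^(r(m+w)) < oo as r(m+w) < -1, and the same
   domination (with exponent m+w < -1) makes the series converge to T_a u in Lambda^w. *)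

From Stdlib Require Import Reals Lra Lia ZArith FunctionalExtensionality.
From Coquelicot Require Import Coquelicot.
Open Scope R_scope.

Lemma Rpower_gt_0 x y : 0 < Rpower x y.
Proof. apply exp_pos. Qed.

Lemma Rpower_le_interpolate (D A B w : R) : 0 <= D -> D <= A -> D <= B -> 0 <= w <= 1 ->
  D <= Rpower A (1 - w) * Rpower B w.
Proof.
  intros [D_pos | <-] DA DB w_bounds.
  - rewrite <- (Rpower_1 D) at 1 by exact D_pos.
    replace 1 with ((1 - w) + w) at 1 by ring.
    rewrite Rpower_plus.
    apply Rmult_le_compat; try (left; apply Rpower_gt_0); apply Rle_Rpower_l; lra.
  - apply Rmult_le_pos; left; apply Rpower_gt_0.
Qed.

Lemma Im_le_Cmod (z : C) : Rabs (Im z) <= Cmod z.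
Proof. eapply Rle_trans; [apply Rmax_r | apply Rmax_Cmod]. Qed.

Lemma Cmod_le_Re_Im (z : C) : Cmod z <= Rabs (Re z) + Rabs (Im z).
Proof.
  destruct z as [a b]; unfold Cmod, Re, Im; simpl.
  pose proof (Rabs_pos a). pose proof (Rabs_pos b).
  rewrite <- (sqrt_Rsqr (Rabs a + Rabs b)) by lra.
  apply sqrt_le_1_alt. rewrite Rsqr_plus, <- !Rsqr_abs. unfold Rsqr.
  pose proof (Rmult_le_pos _ _ (Rabs_pos a) (Rabs_pos b)). lra.
Qed.

Lemma Cmult_Cminus_Cmult (a b c d : C) :
  Cminus (Cmult a b) (Cmult c d) = Cplus (Cmult a (Cminus b d)) (Cmult (Cminus a c) d).
Proof. ring. Qed.

Lemma Lub_Rbar_bounded (E : R -> Prop) (t0 M : R) :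
  E t0 -> (forall t, E t -> t <= M) ->
  is_finite (Lub_Rbar E) /\ t0 <= real (Lub_Rbar E) <= M.
Proof.
  intros E_t0 E_M. destruct (Lub_Rbar_correct E) as [ub lub].
  specialize (ub t0 E_t0). specialize (lub (Finite M) E_M).
  destruct (Lub_Rbar E) as [l | |]; simpl in *; try contradiction.
  split; [reflexivity | lra].
Qed.

Lemma Lub_Rbar_ge (E : R -> Prop) t :
  is_finite (Lub_Rbar E) -> E t -> t <= real (Lub_Rbar E).
Proof.
  intros fin E_t. destruct (Lub_Rbar_correct E) as [ub _].
  specialize (ub t E_t). rewrite <- fin in ub. exact ub.
Qed.

Lemma Cmod_lipschitz (f : R -> C) (df1 df2 : R -> R) (D x y : R) :
  (forall t, is_derive (fun t => Re (f t)) t (df1 t) /\ Rabs (df1 t) <= D) ->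
  (forall t, is_derive (fun t => Im (f t)) t (df2 t) /\ Rabs (df2 t) <= D) ->
  Cmod (Cminus (f y) (f x)) <= 2 * D * Rabs (y - x).
Proof.
  intros d1 d2.
  pose proof (bounded_variation (fun t => Re (f t)) df1 D x y (fun t _ => d1 t)).
  pose proof (bounded_variation (fun t => Im (f t)) df2 D x y (fun t _ => d2 t)).
  eapply Rle_trans; [apply Cmod_le_Re_Im |].
  change (Rabs (Re (f y) - Re (f x)) + Rabs (Im (f y) - Im (f x)) <= 2 * D * Rabs (y - x)).
  lra.
Qed.

Lemma Cmod_cexp2pi t : Cmod (cexp2pi t) = 1.
Proof.
  pose proof (sin2_cos2 (2 * PI * t)) as pythagoras. unfold Rsqr in pythagoras.
  unfold Cmod, cexp2pi, fst, snd. rewrite <- sqrt_1. f_equal. lra.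
Qed.

Lemma cexp2pi_add_nat t (k : nat) : cexp2pi (t + INR k) = cexp2pi t.
Proof.
  unfold cexp2pi. replace (2 * PI * (t + INR k)) with (2 * PI * t + 2 * INR k * PI) by ring.
  now rewrite cos_period, sin_period.
Qed.

Lemma cexp2pi_add_Z t (k : Z) : cexp2pi (t + IZR k) = cexp2pi t.
Proof.
  destruct (Z.le_gt_cases 0 k) as [k_ge0 | k_lt0].
  - rewrite <- (Z2Nat.id k k_ge0), <- INR_IZR_INZ. apply cexp2pi_add_nat.
  - rewrite <- (cexp2pi_add_nat (t + IZR k) (Z.to_nat (- k))).
    rewrite INR_IZR_INZ, Z2Nat.id by lia. rewrite opp_IZR. f_equal. ring.
Qed.

Lemma Cmod_cexp2pi_lipschitz (z x y : R) :
  Cmod (Cminus (cexp2pi (y * z)) (cexp2pi (x * z))) <= 4 * PI * Rabs z * Rabs (y - x).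
Proof.
  assert (bound : forall c, Rabs c <= 1 -> Rabs (c * (2 * PI * z)) <= 2 * PI * Rabs z).
  { intros c Hc. pose proof PI_RGT_0. rewrite Rabs_mult, Rabs_mult, (Rabs_right (2 * PI)) by lra.
    pose proof (Rmult_le_pos (2 * PI) (Rabs z) ltac:(lra) (Rabs_pos z)).
    rewrite <- (Rmult_1_l (2 * PI * Rabs z)) at 2. apply Rmult_le_compat_r; lra. }
  replace (4 * PI * Rabs z) with (2 * (2 * PI * Rabs z)) by ring.
  apply (Cmod_lipschitz (fun t => cexp2pi (t * z))
           (fun t => - sin (2 * PI * (t * z)) * (2 * PI * z))
           (fun t => cos (2 * PI * (t * z)) * (2 * PI * z))); intros t; split.
  - unfold cexp2pi, Re; simpl. auto_derive; [exact I | ring].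
  - apply bound. rewrite Rabs_Ropp. apply Rabs_le, SIN_bound.
  - unfold cexp2pi, Im; simpl. auto_derive; [exact I | ring].
  - apply bound. apply Rabs_le, COS_bound.
Qed.

(** * Hölder functions on the torus *)

Lemma holder_norm_bounds (w H S : R) (f : R -> C) :
  (forall x h, h <> 0 -> Cmod (Cminus (f (x + h)) (f x)) <= H * Rpower (Rabs h) w) ->
  (forall x, Cmod (f x) <= S) ->
  is_finite (holder_semi w f) /\ is_finite (sup_norm f) /\ 0 <= holder_norm w f <= H + S.
Proof.
  intros f_holder f_sup.
  assert (ratio_ge0 : 0 <= Cmod (Cminus (f (0 + 1)) (f 0)) / Rpower (Rabs 1) w).
  { apply Rdiv_le_0_compat; [apply Cmod_ge_0 | apply Rpower_gt_0]. }
  assert (semi : is_finite (holder_semi w f) /\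
    Cmod (Cminus (f (0 + 1)) (f 0)) / Rpower (Rabs 1) w <= real (holder_semi w f) <= H).
  { apply Lub_Rbar_bounded.
    - exists 0, 1. split; [lra | reflexivity].
    - intros t [x [h [h_neq0 ->]]]. apply Rle_div_l; [apply Rpower_gt_0 | auto]. }
  assert (sup : is_finite (sup_norm f) /\ Cmod (f 0) <= real (sup_norm f) <= S).
  { apply Lub_Rbar_bounded.
    - exists 0; reflexivity.
    - intros t [x ->]; auto. }
  pose proof (Cmod_ge_0 (f 0)).
  unfold holder_norm. repeat split; tauto || lra.
Qed.

Lemma in_holder_intro (w H S : R) (f : R -> C) : periodic1 f ->
  (forall x h, h <> 0 -> Cmod (Cminus (f (x + h)) (f x)) <= H * Rpower (Rabs h) w) ->
  (forall x, Cmod (f x) <= S) ->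
  in_holder w f /\ holder_norm w f <= H + S.
Proof.
  intros f_periodic f_holder f_sup.
  destruct (holder_norm_bounds w H S f) as [semi_fin [sup_fin norm_le]]; auto.
  repeat split; auto; lra.
Qed.

Section HolderFunction.

Variables (s : R) (u : R -> C).
Hypothesis u_holder : in_holder s u.

Lemma holder_semi_spec x h : h <> 0 ->
  Cmod (Cminus (u (x + h)) (u x)) <= real (holder_semi s u) * Rpower (Rabs h) s.
Proof.
  intros h_neq0. destruct u_holder as [_ [semi_fin _]].
  apply Rle_div_l; [apply Rpower_gt_0 |].
  apply (Lub_Rbar_ge _ _ semi_fin). exists x, h. auto.
Qed.

Lemma sup_norm_spec x : Cmod (u x) <= real (sup_norm u).
Proof.
  destruct u_holder as [_ [_ sup_fin]]. apply (Lub_Rbar_ge _ _ sup_fin). exists x; reflexivity.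
Qed.

Lemma holder_semi_ge_0 : 0 <= real (holder_semi s u).
Proof.
  apply Rle_trans with (Cmod (Cminus (u (0 + 1)) (u 0)) / Rpower (Rabs 1) s).
  - apply Rdiv_le_0_compat; [apply Cmod_ge_0 | apply Rpower_gt_0].
  - destruct u_holder as [_ [semi_fin _]]. apply (Lub_Rbar_ge _ _ semi_fin).
    exists 0, 1. split; [lra | reflexivity].
Qed.

Lemma sup_norm_le_holder_norm : real (sup_norm u) <= holder_norm s u.
Proof. unfold holder_norm. pose proof holder_semi_ge_0. lra. Qed.

End HolderFunction.

(* The norm of [C] as a normed [R]-module is the Euclidean product norm, equal to [Cmod] only
   propositionally. *)
Lemma norm_C_R (z : C) : @norm R_AbsRing C_R_NormedModule z = Cmod z.
Proof.
  destruct z as [a b]. change (sqrt (Rabs a ^ 2 + Rabs b ^ 2) = sqrt (a ^ 2 + b ^ 2)).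
  now rewrite <- !Rsqr_pow2, <- !Rsqr_abs.
Qed.

Lemma continuous_of_holder (f : R -> C) (s H x : R) : 0 < s -> 0 <= H ->
  (forall h, h <> 0 -> Cmod (Cminus (f (x + h)) (f x)) <= H * Rpower (Rabs h) s) ->
  continuous f x.
Proof.
  intros s_gt0 H_ge0 f_holder.
  apply (filterlim_locally_ball_norm (K := R_AbsRing) (U := C_R_NormedModule)).
  intros eps.
  assert (ratio_gt0 : 0 < eps / (H + 1)) by (apply Rdiv_lt_0_compat; [apply cond_pos | lra]).
  exists (mkposreal _ (Rpower_gt_0 (eps / (H + 1)) (/ s))).
  intros t t_near. unfold ball_norm. rewrite norm_C_R. change (Cmod (Cminus (f t) (f x)) < eps).
  change (Rabs (t - x) < Rpower (eps / (H + 1)) (/ s)) in t_near.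
  destruct (Req_dec t x) as [-> | t_neq_x].
  - unfold Cminus. rewrite Cplus_opp_r, Cmod_0. apply cond_pos.
  - replace t with (x + (t - x)) by ring.
    eapply Rle_lt_trans; [apply f_holder; lra |].
    assert (power_lt : Rpower (Rabs (t - x)) s < eps / (H + 1)).
    { apply Rlt_le_trans with (Rpower (Rpower (eps / (H + 1)) (/ s)) s).
      - apply Rlt_Rpower_l; [lra |]. split; [apply Rabs_pos_lt; lra | exact t_near].
      - rewrite Rpower_mult, Rinv_l, Rpower_1 by lra. apply Rle_refl. }
    apply Rle_lt_trans with ((H + 1) * Rpower (Rabs (t - x)) s).
    + apply Rmult_le_compat_r; [left; apply Rpower_gt_0 | lra].
    + apply Rmult_lt_compat_l with (r := H + 1) in power_lt; [| lra].
      replace ((H + 1) * (eps / (H + 1))) with (pos eps) in power_lt by (field; lra).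
      exact power_lt.
Qed.

(** * Fourier coefficients *)

Lemma is_RInt_Cmult_l (f : R -> C) (a b : R) (c l : C) :
  is_RInt (V := C_R_NormedModule) f a b l ->
  is_RInt (V := C_R_NormedModule) (fun t => Cmult c (f t)) a b (Cmult c l).
Proof.
  intros f_int.
  pose proof (is_RInt_fct_extend_fst f a b l f_int) as re_int.
  pose proof (is_RInt_fct_extend_snd f a b l f_int) as im_int.
  destruct c as [c1 c2].
  apply is_RInt_fct_extend_pair.
  - apply (is_RInt_minus (V := R_NormedModule) _ _ _ _ _ _
             (is_RInt_scal _ _ _ c1 _ re_int) (is_RInt_scal _ _ _ c2 _ im_int)).
  - apply (is_RInt_plus (V := R_NormedModule) _ _ _ _ _ _
             (is_RInt_scal _ _ _ c1 _ im_int) (is_RInt_scal _ _ _ c2 _ re_int)).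
Qed.

(* [C] carries two uniform structures, the product one and the one of [C_AbsRing];
   [locally_C] identifies their neighbourhood filters. *)
Lemma continuous_C_AbsRing (f : R -> C) x :
  continuous f x <-> @continuous R_UniformSpace (AbsRing_UniformSpace C_AbsRing) f x.
Proof. split; intros f_cont P P_near; apply f_cont; now apply locally_C. Qed.

Section FourierCoefficient.

Variables (s : R) (xi : Z).
Hypothesis s_gt0 : 0 < s.

Lemma continuous_fourier_integrand (u : R -> C) x : in_holder s u ->
  continuous (fun t => Cmult (cexp2pi (- t * IZR xi)) (u t)) x.
Proof.
  intros u_holder.
  assert (kernel_cont : continuous (fun t => cexp2pi (- t * IZR xi)) x).
  { apply (continuous_of_holder _ 1 (4 * PI * Rabs (- IZR xi))); [lra | |].
    { pose proof PI_RGT_0. pose proof (Rabs_pos (- IZR xi)). nra. }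
    intros h h_neq0. rewrite Rpower_1 by (apply Rabs_pos_lt; exact h_neq0).
    replace (- (x + h) * IZR xi) with ((x + h) * - IZR xi) by ring.
    replace (- x * IZR xi) with (x * - IZR xi) by ring.
    replace (Rabs h) with (Rabs (x + h - x)) by (f_equal; ring).
    apply Cmod_cexp2pi_lipschitz. }
  assert (u_cont : continuous u x).
  { apply (continuous_of_holder _ s (real (holder_semi s u))); auto.
    - apply (holder_semi_ge_0 s u u_holder).
    - apply (holder_semi_spec s u u_holder). }
  apply continuous_C_AbsRing in kernel_cont, u_cont.
  apply continuous_C_AbsRing.
  exact (continuous_mult (U := R_UniformSpace) (K := C_AbsRing) _ _ x kernel_cont u_cont).
Qed.

Lemma is_RInt_fourier (u : R -> C) : in_holder s u ->
  is_RInt (V := C_R_NormedModule) (fun t => Cmult (cexp2pi (- t * IZR xi)) (u t)) 0 1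
    (fourier u xi).
Proof.
  intros u_holder. apply (RInt_correct (V := C_R_CompleteNormedModule)).
  apply ex_RInt_continuous. intros x _. now apply continuous_fourier_integrand.
Qed.

Lemma fourier_plus (u v : R -> C) : in_holder s u -> in_holder s v ->
  fourier (fun x => Cplus (u x) (v x)) xi = Cplus (fourier u xi) (fourier v xi).
Proof.
  intros u_holder v_holder. apply (is_RInt_unique (V := C_R_CompleteNormedModule)).
  eapply is_RInt_ext; [intros t _; symmetry; apply Cmult_plus_distr_l |].
  apply (is_RInt_plus (V := C_R_NormedModule)); now apply is_RInt_fourier.
Qed.

Lemma fourier_scal (c : C) (u : R -> C) : in_holder s u ->
  fourier (fun x => Cmult c (u x)) xi = Cmult c (fourier u xi).
Proof.
  intros u_holder. apply (is_RInt_unique (V := C_R_CompleteNormedModule)).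
  apply (is_RInt_ext (V := C_R_NormedModule)
           (fun t => Cmult c (Cmult (cexp2pi (- t * IZR xi)) (u t)))).
  { intros t _. rewrite !Cmult_assoc, (Cmult_comm c). reflexivity. }
  apply is_RInt_Cmult_l. now apply is_RInt_fourier.
Qed.

Lemma Cmod_fourier_le (u : R -> C) : in_holder s u -> Cmod (fourier u xi) <= real (sup_norm u).
Proof.
  intros u_holder. rewrite <- norm_C_R, <- (Rmult_1_l (real (sup_norm u))).
  replace 1 with (1 - 0) by ring.
  apply (norm_RInt_le_const (fun t => Cmult (cexp2pi (- t * IZR xi)) (u t)) _ _ _ _ Rle_0_1);
    [| now apply is_RInt_fourier].
  intros t _. rewrite norm_C_R, Cmod_mult, Cmod_cexp2pi, Rmult_1_l.
  apply (sup_norm_spec s u u_holder).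
Qed.

End FourierCoefficient.

Lemma holder_zero (s : R) : in_holder s (fun _ => RtoC 0) /\ holder_norm s (fun _ => RtoC 0) <= 0.
Proof.
  destruct (in_holder_intro s 0 0 (fun _ => RtoC 0)) as [zero_holder zero_norm].
  - intros x; reflexivity.
  - intros x h _. unfold Cminus. rewrite Cplus_opp_r, Cmod_0, Rmult_0_l. lra.
  - intros x. rewrite Cmod_0. lra.
  - split; [exact zero_holder | lra].
Qed.

Lemma fourier_in_dual (s : R) (xi : Z) : 0 < s ->
  in_dual s (fun u => fourier u xi) /\ real (dual_norm s (fun u => fourier u xi)) <= 1.
Proof.
  intros s_gt0.
  destruct (Lub_Rbar_bounded
              (fun t => exists u, in_holder s u /\ holder_norm s u <= 1 /\ t = Cmod (fourier u xi))
              (Cmod (fourier (fun _ => RtoC 0) xi)) 1) as [norm_fin [_ norm_le]].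
  - exists (fun _ => RtoC 0). destruct (holder_zero s) as [zero_holder zero_norm].
    split; [exact zero_holder | split; [lra | reflexivity]].
  - intros t [u [u_holder [u_norm ->]]].
    eapply Rle_trans; [now apply (Cmod_fourier_le s) |].
    eapply Rle_trans; [apply (sup_norm_le_holder_norm s u u_holder) | exact u_norm].
  - repeat split; auto.
    + intros u v u_holder v_holder. now apply (fourier_plus s).
    + intros c u u_holder. now apply (fourier_scal s).
Qed.

(** * Series over Z *)

Lemma Rpower_antitone_l (x y q : R) : q <= 0 -> 0 < x <= y -> Rpower y q <= Rpower x q.
Proof.
  intros q_le0 xy. rewrite <- (Ropp_involutive q), (Rpower_Ropp x (- q)), (Rpower_Ropp y (- q)).
  apply Rinv_le_contravar; [apply Rpower_gt_0 | apply Rle_Rpower_l; lra].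
Qed.

Lemma is_lim_seq_partial_sums (a : nat -> R) :
  ex_series a -> is_lim_seq (sum_f_R0 a) (Series a).
Proof.
  intros a_sum. apply (is_lim_seq_ext (sum_n a)); [intros; apply sum_n_Reals |].
  exact (Series_correct a a_sum).
Qed.

Lemma ex_series_bounded_partial_sums (a : nat -> R) (M : R) :
  (forall n, 0 <= a n) -> (forall N, sum_f_R0 a N <= M) -> ex_series a.
Proof.
  intros a_ge0 sums_le.
  destruct (growing_cv (sum_f_R0 a)) as [l l_lim].
  - intro n. simpl. specialize (a_ge0 (S n)). lra.
  - exists M. intros t [N ->]. apply sums_le.
  - exists l. now apply is_series_Reals.
Qed.

(* Mean value bound for [t^(-q)] on [[x, x+1]], derived from [ln y <= y - 1]. *)
Lemma Rpower_succ_le_diff (q x : R) : 0 < q -> 0 < x ->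
  q * Rpower (x + 1) (- (q + 1)) <= Rpower x (- q) - Rpower (x + 1) (- q).
Proof.
  intros q_gt0 x_gt0. unfold Rpower.
  assert (ln_ratio : ln x - ln (x + 1) <= - / (x + 1)).
  { rewrite <- ln_div by lra.
    pose proof (exp_ineq1_le (ln (x / (x + 1)))) as ln_le.
    rewrite exp_ln in ln_le by (apply Rdiv_lt_0_compat; lra).
    replace (x / (x + 1)) with (1 - / (x + 1)) in ln_le |- * by (field; lra). lra. }
  replace (- q * ln x) with (- q * ln (x + 1) + q * (ln (x + 1) - ln x)) by ring.
  replace (- (q + 1) * ln (x + 1)) with (- q * ln (x + 1) + - ln (x + 1)) by ring.
  rewrite !exp_plus, exp_Ropp, exp_ln by lra.
  pose proof (exp_ineq1_le (q * (ln (x + 1) - ln x))).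
  pose proof (exp_pos (- q * ln (x + 1))).
  assert (q * / (x + 1) <= q * (ln (x + 1) - ln x)) by (apply Rmult_le_compat_l; lra).
  nra.
Qed.

Lemma ex_series_Rpower_nat (q : R) : q < -1 -> ex_series (fun n => Rpower (INR n + 1) q).
Proof.
  intros q_lt. set (p := - q - 1). set (b := fun n : nat => Rpower (INR n + 1) (- p)).
  assert (p_gt0 : 0 < p) by (unfold p; lra).
  assert (term_le : forall n, Rpower (INR (S n) + 1) q <= / p * (b n - b (S n))).
  { intro n. unfold b. rewrite S_INR. pose proof (pos_INR n).
    replace q with (- (p + 1)) by (unfold p; ring).
    apply Rmult_le_reg_l with p; [exact p_gt0 |].
    rewrite <- Rmult_assoc, Rinv_r, Rmult_1_l by lra. apply Rpower_succ_le_diff; lra. }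
  assert (telescope : forall N,
    sum_f_R0 (fun n => / p * (b n - b (S n))) N = / p * (b 0%nat - b (S N))).
  { induction N as [| N IH]; simpl; [ring | rewrite IH; ring]. }
  apply ex_series_incr_1, ex_series_bounded_partial_sums with (M := / p * b 0%nat).
  - intros n. left. apply Rpower_gt_0.
  - intros N. eapply Rle_trans; [apply sum_growing; exact term_le |].
    rewrite telescope. pose proof (Rpower_gt_0 (INR (S N) + 1) (- p)).
    pose proof (Rinv_0_lt_compat p p_gt0). unfold b at 2. nra.
Qed.

Lemma japan_ge_1 xi : 1 <= japan xi.
Proof.
  unfold japan. rewrite <- sqrt_1 at 1. apply sqrt_le_1_alt.
  pose proof (pow2_ge_0 (IZR xi)). lra.
Qed.

Lemma japan_ge_abs xi : Rabs (IZR xi) <= japan xi.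
Proof.
  unfold japan. rewrite <- sqrt_Rsqr_abs. apply sqrt_le_1_alt.
  unfold Rsqr. simpl. lra.
Qed.

Definition Z_enum (n : nat) : Z :=
  if Nat.even n then Z.of_nat (Nat.div2 n) else (- Z.of_nat (S (Nat.div2 n)))%Z.

Lemma Z_enum_even k : Z_enum (2 * k) = Z.of_nat k.
Proof. unfold Z_enum. now rewrite Nat.even_even, Nat.div2_double. Qed.

Lemma Z_enum_odd k : Z_enum (2 * k + 1) = (- Z.of_nat (S k))%Z.
Proof. unfold Z_enum. now rewrite Nat.even_odd, Nat.add_1_r, Nat.div2_succ_double. Qed.

Lemma Z_enum_growth n : INR n <= 2 * Rabs (IZR (Z_enum n)).
Proof.
  destruct (Nat.Even_or_Odd n) as [[k ->] | [k ->]].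
  - rewrite Z_enum_even, <- INR_IZR_INZ, Rabs_right, mult_INR by (apply Rle_ge, pos_INR).
    simpl. lra.
  - rewrite Z_enum_odd, opp_IZR, Rabs_Ropp, <- INR_IZR_INZ, Rabs_right by (apply Rle_ge, pos_INR).
    rewrite S_INR, plus_INR, mult_INR. simpl. lra.
Qed.

Lemma ex_series_japan_Rpower (phi : nat -> Z) (q : R) : q < -1 ->
  (forall n, INR n <= 2 * Rabs (IZR (phi n))) ->
  ex_series (fun n => Rpower (japan (phi n)) q).
Proof.
  intros q_lt phi_growth.
  apply (ex_series_le (K := R_AbsRing) (V := R_CompleteNormedModule) _
           (fun n => Rpower (INR n + 1) q * Rpower (/ 4) q)).
  - intros n. change (norm ?x) with (Rabs x).
    rewrite Rabs_right by (left; apply Rpower_gt_0).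
    rewrite Rpower_mult_distr by (pose proof (pos_INR n); lra).
    apply Rpower_antitone_l; [lra |].
    pose proof (pos_INR n). pose proof (phi_growth n).
    pose proof (japan_ge_1 (phi n)). pose proof (japan_ge_abs (phi n)). lra.
  - apply ex_series_scal_r, ex_series_Rpower_nat, q_lt.
Qed.

Lemma ex_series_japan_dominated (f : Z -> R) (phi : nat -> Z) (c q : R) : q < -1 ->
  (forall n, INR n <= 2 * Rabs (IZR (phi n))) ->
  (forall xi, Rabs (f xi) <= c * Rpower (japan xi) q) ->
  ex_series (fun n => f (phi n)).
Proof.
  intros q_lt phi_growth f_le.
  apply (ex_series_le (K := R_AbsRing) (V := R_CompleteNormedModule) _
           (fun n => c * Rpower (japan (phi n)) q)); [intros n; apply f_le |].
  apply (ex_series_scal_l (K := R_AbsRing) (V := R_NormedModule)).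
  now apply ex_series_japan_Rpower.
Qed.

Lemma sum_Z_enum (f : Z -> R) K :
  sum_f_R0 (fun n => f (Z_enum n)) (2 * K + 1) =
  sum_f_R0 (fun n => f (Z.of_nat n)) K + sum_f_R0 (fun n => f (- Z.of_nat (S n))%Z) K.
Proof.
  induction K as [| K IH]; [reflexivity |].
  replace (2 * S K + 1)%nat with (S (S (2 * K + 1))) by lia.
  cbn [sum_f_R0]. rewrite IH.
  replace (S (2 * K + 1)) with (2 * S K)%nat by lia.
  replace (S (2 * S K)) with (2 * S K + 1)%nat by lia.
  rewrite Z_enum_even, Z_enum_odd. ring.
Qed.

Lemma Series_Z_enum (f : Z -> R) (c q : R) : q < -1 ->
  (forall xi, Rabs (f xi) <= c * Rpower (japan xi) q) ->
  Series (fun n => f (Z.of_nat n)) + Series (fun n => f (- Z.of_nat (S n))%Z) =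
  Series (fun n => f (Z_enum n)).
Proof.
  intros q_lt f_le.
  assert (growth_pos : forall n, INR n <= 2 * Rabs (IZR (Z.of_nat n))).
  { intros n. rewrite <- INR_IZR_INZ, Rabs_right by (apply Rle_ge, pos_INR).
    pose proof (pos_INR n). lra. }
  assert (growth_neg : forall n, INR n <= 2 * Rabs (IZR (- Z.of_nat (S n)))).
  { intros n. rewrite opp_IZR, Rabs_Ropp, <- INR_IZR_INZ, Rabs_right by (apply Rle_ge, pos_INR).
    rewrite S_INR. pose proof (pos_INR n). lra. }
  pose proof (is_lim_seq_partial_sums _ (ex_series_japan_dominated f _ c q q_lt Z_enum_growth f_le))
    as lim_enum.
  pose proof (is_lim_seq_plus' _ _ _ _
    (is_lim_seq_partial_sums _ (ex_series_japan_dominated f _ c q q_lt growth_pos f_le))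
    (is_lim_seq_partial_sums _ (ex_series_japan_dominated f _ c q q_lt growth_neg f_le)))
    as lim_split.
  apply (is_lim_seq_ext _ _ _ (fun K => eq_sym (sum_Z_enum f K))) in lim_split.
  apply (is_lim_seq_subseq _ _ (fun K => (2 * K + 1)%nat)) in lim_enum;
    [| apply eventually_subseq; intros; lia].
  apply is_lim_seq_unique in lim_enum, lim_split.
  rewrite lim_enum in lim_split. now injection lim_split.
Qed.

Definition cseries (g : nat -> C) : C := (Series (fun n => Re (g n)), Series (fun n => Im (g n))).

Lemma zsum_Z_enum (g : Z -> C) (c q : R) : q < -1 ->
  (forall xi, Cmod (g xi) <= c * Rpower (japan xi) q) ->
  zsum g = cseries (fun n => g (Z_enum n)).
Proof.
  intros q_lt g_le. unfold zsum, cseries. f_equal.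
  - apply (Series_Z_enum (fun xi => Re (g xi)) c q q_lt).
    intros xi. eapply Rle_trans; [apply re_le_Cmod | apply g_le].
  - apply (Series_Z_enum (fun xi => Im (g xi)) c q q_lt).
    intros xi. eapply Rle_trans; [apply Im_le_Cmod | apply g_le].
Qed.

Lemma Series_dominated (f b : nat -> R) : ex_series b -> (forall n, Rabs (f n) <= b n) ->
  ex_series f /\ Rabs (Series f) <= Series b.
Proof.
  intros b_sum f_le.
  assert (abs_sum : ex_series (fun n => Rabs (f n))).
  { apply (ex_series_le (K := R_AbsRing) (V := R_CompleteNormedModule) _ b); auto.
    intros n. change (norm ?x) with (Rabs x). now rewrite Rabs_Rabsolu. }
  split; [now apply ex_series_Rabs |].
  eapply Rle_trans; [now apply Series_Rabs |].
  apply Series_le; auto. intros n. split; [apply Rabs_pos | auto].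
Qed.

Section DominatedSeries.

Variables (g : nat -> C) (b : nat -> R).
Hypotheses (b_sum : ex_series b) (g_le : forall n, Cmod (g n) <= b n).

Lemma ex_series_Re : ex_series (fun n => Re (g n)).
Proof.
  apply (Series_dominated _ b b_sum). intros n. eapply Rle_trans; [apply re_le_Cmod | auto].
Qed.

Lemma ex_series_Im : ex_series (fun n => Im (g n)).
Proof.
  apply (Series_dominated _ b b_sum). intros n. eapply Rle_trans; [apply Im_le_Cmod | auto].
Qed.

Lemma Cmod_cseries_le : Cmod (cseries g) <= 2 * Series b.
Proof.
  eapply Rle_trans; [apply Cmod_le_Re_Im |]. unfold cseries; simpl Re; simpl Im.
  destruct (Series_dominated (fun n => Re (g n)) b b_sum) as [_ re_le];
    [intros n; eapply Rle_trans; [apply re_le_Cmod | auto] |].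
  destruct (Series_dominated (fun n => Im (g n)) b b_sum) as [_ im_le];
    [intros n; eapply Rle_trans; [apply Im_le_Cmod | auto] |].
  lra.
Qed.

Lemma cseries_sub_sum_n (N : nat) :
  Cminus (cseries g) (sum_n (G := C_AbelianMonoid) g N) = cseries (fun k => g (S N + k)%nat).
Proof.
  assert (sum_n_parts : forall M, sum_n (G := C_AbelianMonoid) g M =
    (sum_f_R0 (fun n => Re (g n)) M, sum_f_R0 (fun n => Im (g n)) M)).
  { induction M as [| M IH]; [rewrite sum_O; apply surjective_pairing |].
    rewrite (@sum_Sn C_AbelianMonoid), IH. reflexivity. }
  rewrite sum_n_parts. unfold cseries, Cminus, Cplus, Copp; simpl.
  rewrite (Series_incr_n (fun n => Re (g n)) (S N)), (Series_incr_n (fun n => Im (g n)) (S N))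
    by (lia || apply ex_series_Re || apply ex_series_Im).
  simpl. f_equal; ring.
Qed.

End DominatedSeries.

Lemma cseries_minus (g1 g2 : nat -> C) (b : nat -> R) : ex_series b ->
  (forall n, Cmod (g1 n) <= b n) -> (forall n, Cmod (g2 n) <= b n) ->
  Cminus (cseries g1) (cseries g2) = cseries (fun n => Cminus (g1 n) (g2 n)).
Proof.
  intros b_sum g1_le g2_le. unfold cseries, Cminus, Cplus, Copp; simpl.
  f_equal; symmetry; apply Series_minus;
    (apply (ex_series_Re _ b) || apply (ex_series_Im _ b)); auto.
Qed.

Section HolderSeries.

Variables (g : nat -> R -> C) (b : nat -> R) (w : R).
Hypotheses (b_sum : ex_series b)
  (g_sup : forall n x, Cmod (g n x) <= b n)
  (g_holder : forall n x h, h <> 0 ->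
     Cmod (Cminus (g n (x + h)) (g n x)) <= b n * Rpower (Rabs h) w).

Lemma holder_norm_cseries :
  is_finite (holder_semi w (fun x => cseries (fun n => g n x))) /\
  is_finite (sup_norm (fun x => cseries (fun n => g n x))) /\
  0 <= holder_norm w (fun x => cseries (fun n => g n x)) <= 4 * Series b.
Proof.
  replace (4 * Series b) with (2 * Series b + 2 * Series b) by ring.
  apply holder_norm_bounds.
  - intros x h h_neq0. rewrite (cseries_minus _ _ b) by auto.
    rewrite Rmult_assoc, <- Series_scal_r.
    apply Cmod_cseries_le; [now apply ex_series_scal_r | auto].
  - intros x. now apply (Cmod_cseries_le _ b).
Qed.

End HolderSeries.

Lemma holder_norm_cseries_remainder (g : nat -> R -> C) (b : nat -> R) (w : R) :
  ex_series b -> (forall n x, Cmod (g n x) <= b n) ->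
  (forall n x h, h <> 0 -> Cmod (Cminus (g n (x + h)) (g n x)) <= b n * Rpower (Rabs h) w) ->
  is_lim_seq (fun N => holder_norm w (fun x =>
    Cminus (cseries (fun n => g n x)) (sum_n (G := C_AbelianMonoid) (fun n => g n x) N))) 0.
Proof.
  intros b_sum g_sup g_holder.
  apply (is_lim_seq_le_le (fun _ => 0) _ (fun N => 4 * (Series b - sum_f_R0 b N)));
    [| apply is_lim_seq_const |].
  - intros N.
    assert (remainder : (fun x => Cminus (cseries (fun n => g n x))
                                     (sum_n (G := C_AbelianMonoid) (fun n => g n x) N))
                        = fun x => cseries (fun k => g (S N + k)%nat x)).
    { apply functional_extensionality. intros x. now apply (cseries_sub_sum_n (fun n => g n x) b). }
    rewrite remainder, (Series_incr_n b (S N)) by (lia || auto). simpl pred.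
    replace (sum_f_R0 b N + Series (fun k => b (S N + k)%nat) - sum_f_R0 b N)
      with (Series (fun k => b (S N + k)%nat)) by ring.
    apply (holder_norm_cseries (fun k => g (S N + k)%nat) (fun k => b (S N + k)%nat));
      auto. now apply ex_series_incr_n.
  - replace (Finite 0) with (Rbar_mult 4 (Series b - Series b)) by (simpl; f_equal; ring).
    apply is_lim_seq_scal_l, is_lim_seq_minus'; [apply is_lim_seq_const |].
    now apply is_lim_seq_partial_sums.
Qed.

(** * Symbol estimates *)

Lemma Rpower_interpolate_scale (K J t m w : R) : 0 < K -> 0 < J -> 0 < t ->
  Rpower (K * Rpower J m) (1 - w) * Rpower (K * Rpower J (m + 1) * t) w =
  K * Rpower J (m + w) * Rpower t w.
Proof.
  intros K_gt0 J_gt0 t_gt0.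
  pose proof (Rpower_gt_0 J m). pose proof (Rpower_gt_0 J (m + 1)).
  rewrite <- !Rpower_mult_distr, !Rpower_mult by (auto; apply Rmult_lt_0_compat; auto).
  transitivity (Rpower K (1 - w + w) * Rpower J (m * (1 - w) + (m + 1) * w) * Rpower t w);
    [rewrite !Rpower_plus; ring |].
  replace (1 - w + w) with 1 by ring. replace (m * (1 - w) + (m + 1) * w) with (m + w) by ring.
  now rewrite Rpower_1.
Qed.

Definition symbol_mode (a : R -> Z -> C) (xi : Z) (x : R) : C :=
  Cmult (cexp2pi (x * IZR xi)) (a x xi).

Lemma symbol_mode_periodic (a : R -> Z -> C) xi :
  (forall x, a (x + 1) xi = a x xi) -> periodic1 (symbol_mode a xi).
Proof.
  intros a_periodic x. unfold symbol_mode.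
  rewrite a_periodic, Rmult_plus_distr_r, Rmult_1_l. now rewrite cexp2pi_add_Z.
Qed.

Section SymbolEstimates.

Variables (m rho delta : R) (a : R -> Z -> C).
Hypothesis a_symbol : symbol_class m rho delta a.

Lemma symbol_class_sup :
  exists C0, 0 <= C0 /\ forall x xi, Cmod (a x xi) <= C0 * Rpower (japan xi) m.
Proof.
  destruct a_symbol as [_ [_ a_bounds]]. destruct (a_bounds 0%nat) as [C0 C0_bound]; [lia |].
  assert (a_le : forall x xi, Cmod (a x xi) <= C0 * Rpower (japan xi) m).
  { intros x xi. specialize (C0_bound x xi). simpl INR in C0_bound.
    rewrite Rmult_0_r, Rplus_0_r in C0_bound. now rewrite (surjective_pairing (a x xi)). }
  exists C0. split; [| exact a_le].
  pose proof (a_le 0 0%Z). pose proof (Cmod_ge_0 (a 0 0%Z)). pose proof (Rpower_gt_0 (japan 0) m).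
  destruct (Rle_or_lt 0 C0); [auto | nra].
Qed.

Lemma symbol_class_lipschitz : exists C1, 0 <= C1 /\ forall x y xi,
  Cmod (Cminus (a y xi) (a x xi)) <= C1 * Rpower (japan xi) (m + delta) * Rabs (y - x).
Proof.
  destruct a_symbol as [_ [a_smooth a_bounds]].
  destruct (a_bounds 1%nat) as [C1 C1_bound]; [lia |].
  assert (deriv_le : forall t xi,
    Rabs (Derive (fun t => Re (a t xi)) t) <= C1 * Rpower (japan xi) (m + delta) /\
    Rabs (Derive (fun t => Im (a t xi)) t) <= C1 * Rpower (japan xi) (m + delta)).
  { intros t xi. specialize (C1_bound t xi). simpl INR in C1_bound. rewrite Rmult_1_r in C1_bound.
    split; eapply Rle_trans; [| exact C1_bound | | exact C1_bound].
    - apply (re_le_Cmod (cderiv_n 1 (fun t => a t xi) t)).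
    - apply (Im_le_Cmod (cderiv_n 1 (fun t => a t xi) t)). }
  exists (2 * Rabs C1). split; [pose proof (Rabs_pos C1); lra |].
  intros x y xi. pose proof (Rpower_gt_0 (japan xi) (m + delta)).
  apply Rle_trans with (2 * (C1 * Rpower (japan xi) (m + delta)) * Rabs (y - x)).
  - apply (Cmod_lipschitz (fun t => a t xi) (Derive (fun t => Re (a t xi)))
             (Derive (fun t => Im (a t xi)))); intros t; split;
      try apply Derive_correct, (a_smooth xi 1%nat t); apply deriv_le.
  - apply Rmult_le_compat_r; [apply Rabs_pos |].
    pose proof (Rle_abs C1). nra.
Qed.

Hypothesis delta_le1 : delta <= 1.

Lemma symbol_mode_lipschitz : exists L, 0 <= L /\ forall xi x h,
  Cmod (Cminus (symbol_mode a xi (x + h)) (symbol_mode a xi x))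
    <= L * Rpower (japan xi) (m + 1) * Rabs h.
Proof.
  destruct symbol_class_sup as [C0 [C0_ge0 a_le]].
  destruct symbol_class_lipschitz as [C1 [C1_ge0 a_lip]].
  exists (C1 + 4 * PI * C0). split; [pose proof PI_RGT_0; nra |].
  intros xi x h. set (J := japan xi).
  assert (J_ge1 : 1 <= J) by apply japan_ge_1.
  assert (xi_le : Rabs (IZR xi) <= J) by apply japan_ge_abs.
  assert (J_step : J * Rpower J m = Rpower J (m + 1)) by (rewrite Rpower_plus, Rpower_1; lra).
  assert (J_delta : Rpower J (m + delta) <= Rpower J (m + 1)) by (apply Rle_Rpower; lra).
  pose proof (Rpower_gt_0 J m). pose proof (Rabs_pos h). pose proof PI_RGT_0.
  unfold symbol_mode. rewrite Cmult_Cminus_Cmult.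
  eapply Rle_trans; [apply Cmod_triangle |]. rewrite !Cmod_mult, Cmod_cexp2pi, Rmult_1_l.
  pose proof (a_lip x (x + h) xi) as a_diff.
  pose proof (Cmod_cexp2pi_lipschitz (IZR xi) x (x + h)) as e_diff.
  replace (x + h - x) with h in a_diff, e_diff by ring. fold J in a_diff.
  pose proof (a_le x xi) as a_x_le. fold J in a_x_le.
  assert (e_term : Cmod (Cminus (cexp2pi ((x + h) * IZR xi)) (cexp2pi (x * IZR xi))) * Cmod (a x xi)
                   <= 4 * PI * C0 * Rpower J (m + 1) * Rabs h).
  { rewrite <- J_step.
    apply Rle_trans with (4 * PI * Rabs (IZR xi) * Rabs h * (C0 * Rpower J m));
      [apply Rmult_le_compat; auto; apply Cmod_ge_0 |].
    replace (4 * PI * Rabs (IZR xi) * Rabs h * (C0 * Rpower J m))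
      with (4 * PI * C0 * Rpower J m * Rabs h * Rabs (IZR xi)) by ring.
    replace (4 * PI * C0 * (J * Rpower J m) * Rabs h)
      with (4 * PI * C0 * Rpower J m * Rabs h * J) by ring.
    apply Rmult_le_compat_l; [| exact xi_le].
    apply Rmult_le_pos; [apply Rmult_le_pos; [apply Rmult_le_pos |] |]; lra. }
  assert (a_term : C1 * Rpower J (m + delta) * Rabs h <= C1 * Rpower J (m + 1) * Rabs h).
  { apply Rmult_le_compat_r; [lra |]. apply Rmult_le_compat_l; lra. }
  lra.
Qed.

Lemma symbol_mode_estimates (w : R) : 0 <= w <= 1 -> exists K, 0 < K /\ forall xi,
  (forall x, Cmod (symbol_mode a xi x) <= K * Rpower (japan xi) (m + w)) /\
  (forall x h, h <> 0 -> Cmod (Cminus (symbol_mode a xi (x + h)) (symbol_mode a xi x))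
                           <= K * Rpower (japan xi) (m + w) * Rpower (Rabs h) w).
Proof.
  intros w_bounds.
  destruct symbol_class_sup as [C0 [C0_ge0 a_le]].
  destruct symbol_mode_lipschitz as [L [L_ge0 mode_lip]].
  exists (2 * C0 + L + 1). split; [lra |]. intros xi.
  set (J := japan xi).
  assert (J_ge1 : 1 <= J) by apply japan_ge_1.
  assert (J_w : Rpower J m <= Rpower J (m + w)) by (apply Rle_Rpower; lra).
  pose proof (Rpower_gt_0 J m).
  assert (mode_le : forall x, Cmod (symbol_mode a xi x) <= C0 * Rpower J m).
  { intros x. unfold symbol_mode. rewrite Cmod_mult, Cmod_cexp2pi, Rmult_1_l. apply a_le. }
  split.
  - intros x. eapply Rle_trans; [apply mode_le |]. apply Rmult_le_compat; lra.
  - intros x h h_neq0. pose proof (Rabs_pos_lt h h_neq0).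
    rewrite <- Rpower_interpolate_scale by lra.
    apply Rpower_le_interpolate; [apply Cmod_ge_0 | | | exact w_bounds].
    + unfold Cminus. eapply Rle_trans; [apply Cmod_triangle |]. rewrite Cmod_opp.
      pose proof (mode_le (x + h)). pose proof (mode_le x). nra.
    + eapply Rle_trans; [apply mode_lip |]. fold J.
      pose proof (Rpower_gt_0 J (m + 1)).
      apply Rmult_le_compat_r; [lra |]. apply Rmult_le_compat_r; lra.
Qed.

End SymbolEstimates.

Lemma symbol_mode_in_holder (a : R -> Z -> C) (K q w : R) (xi : Z) :
  (forall x, a (x + 1) xi = a x xi) ->
  (forall x, Cmod (symbol_mode a xi x) <= K * Rpower (japan xi) q) ->
  (forall x h, h <> 0 -> Cmod (Cminus (symbol_mode a xi (x + h)) (symbol_mode a xi x))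
                           <= K * Rpower (japan xi) q * Rpower (Rabs h) w) ->
  in_holder w (symbol_mode a xi) /\ holder_norm w (symbol_mode a xi) <= 2 * K * Rpower (japan xi) q.
Proof.
  intros a_periodic mode_sup mode_holder.
  destruct (in_holder_intro w (K * Rpower (japan xi) q) (K * Rpower (japan xi) q)
              (symbol_mode a xi))
    as [mode_in mode_norm]; auto.
  - now apply symbol_mode_periodic.
  - split; [exact mode_in | lra].
Qed.

(** * The nuclear decomposition of T_a *)

Definition Top_term (a : R -> Z -> C) (u : R -> C) (n : nat) (x : R) : C :=
  Cmult (fourier u (Z_enum n)) (symbol_mode a (Z_enum n) x).

Section TopExpansion.

Variables (a : R -> Z -> C) (q K s w : R) (u : R -> C).
Hypotheses (a_periodic : forall xi x, a (x + 1) xi = a x xi) (q_lt : q < -1)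
  (s_gt0 : 0 < s) (u_holder : in_holder s u).
Hypothesis mode_sup : forall xi x, Cmod (symbol_mode a xi x) <= K * Rpower (japan xi) q.
Hypothesis mode_holder : forall xi x h, h <> 0 ->
  Cmod (Cminus (symbol_mode a xi (x + h)) (symbol_mode a xi x))
    <= K * Rpower (japan xi) q * Rpower (Rabs h) w.

Lemma Cmod_fourier_mul_le (xi : Z) (z : C) (bound : R) : Cmod z <= bound ->
  Cmod (Cmult (fourier u xi) z) <= real (sup_norm u) * bound.
Proof.
  intros z_le. rewrite Cmod_mult.
  apply Rmult_le_compat; [apply Cmod_ge_0 | apply Cmod_ge_0 | | exact z_le].
  now apply (Cmod_fourier_le s).
Qed.

Lemma ex_series_Top_term_bound :
  ex_series (fun n => real (sup_norm u) * K * Rpower (japan (Z_enum n)) q).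
Proof.
  apply (ex_series_scal_l (K := R_AbsRing) (V := R_NormedModule) (real (sup_norm u) * K)).
  now apply ex_series_japan_Rpower, Z_enum_growth.
Qed.

Lemma Top_eq_cseries x : Top a u x = cseries (fun n => Top_term a u n x).
Proof.
  unfold Top. rewrite (zsum_Z_enum _ (real (sup_norm u) * K) q q_lt).
  - unfold Top_term, symbol_mode. f_equal. apply functional_extensionality. intros n.
    apply Cmult_comm.
  - intros xi. rewrite Cmult_comm, Rmult_assoc. apply Cmod_fourier_mul_le, (mode_sup xi x).
Qed.

Lemma Top_term_sup n x :
  Cmod (Top_term a u n x) <= real (sup_norm u) * K * Rpower (japan (Z_enum n)) q.
Proof. rewrite Rmult_assoc. now apply Cmod_fourier_mul_le. Qed.

Lemma Top_term_holder n x h : h <> 0 ->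
  Cmod (Cminus (Top_term a u n (x + h)) (Top_term a u n x))
    <= real (sup_norm u) * K * Rpower (japan (Z_enum n)) q * Rpower (Rabs h) w.
Proof.
  intros h_neq0. unfold Top_term.
  replace (Cminus _ _) with (Cmult (fourier u (Z_enum n))
    (Cminus (symbol_mode a (Z_enum n) (x + h)) (symbol_mode a (Z_enum n) x))) by ring.
  rewrite !Rmult_assoc, <- (Rmult_assoc K). apply Cmod_fourier_mul_le. now apply mode_holder.
Qed.

Lemma Top_in_holder : in_holder w (Top a u).
Proof.
  assert (Top_eq : Top a u = fun x => cseries (fun n => Top_term a u n x))
    by exact (functional_extensionality _ _ Top_eq_cseries).
  destruct (holder_norm_cseries (Top_term a u) _ w ex_series_Top_term_bound Top_term_sup
              Top_term_holder) as [semi_fin [sup_fin _]].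
  rewrite Top_eq. split; [| split; assumption].
  intros x. f_equal. apply functional_extensionality. intros n. unfold Top_term.
  now rewrite (symbol_mode_periodic a _ (a_periodic _)).
Qed.

Lemma Top_expansion :
  is_lim_seq (fun N => holder_norm w (fun x =>
    Cminus (Top a u x) (sum_n (G := C_AbelianMonoid) (fun n => Top_term a u n x) N))) 0.
Proof.
  apply (is_lim_seq_ext (fun N => holder_norm w (fun x =>
    Cminus (cseries (fun n => Top_term a u n x))
           (sum_n (G := C_AbelianMonoid) (fun n => Top_term a u n x) N)))).
  { intros N. f_equal. apply functional_extensionality. intros x. now rewrite Top_eq_cseries. }
  exact (holder_norm_cseries_remainder _ _ w ex_series_Top_term_bound Top_term_sup Top_term_holder).
Qed.

End TopExpansion.

Lemma rpow_ge_0 x p : 0 <= rpow x p.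
Proof. unfold rpow. destruct (Rle_dec x 0); [lra | left; apply Rpower_gt_0]. Qed.

Lemma rpow_le_Rpower x y p : x <= y -> 0 < y -> 0 <= p -> rpow x p <= Rpower y p.
Proof.
  intros. unfold rpow. destruct (Rle_dec x 0); [left; apply Rpower_gt_0 | apply Rle_Rpower_l; lra].
Qed.

Lemma ex_series_nuclear_weights (A B : nat -> R) (r q c : R) : 0 < r -> r * q < -1 -> 0 < c ->
  (forall n, A n <= c) -> (forall n, B n <= c * Rpower (japan (Z_enum n)) q) ->
  ex_series (fun n => rpow (A n) r * rpow (B n) r).
Proof.
  intros r_gt0 rq_lt c_gt0 A_le B_le.
  apply (ex_series_le (K := R_AbsRing) (V := R_CompleteNormedModule) _
           (fun n => Rpower c r * (Rpower c r * Rpower (japan (Z_enum n)) (r * q)))).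
  - intros n. change (norm ?x) with (Rabs x).
    rewrite Rabs_right by (apply Rle_ge, Rmult_le_pos; apply rpow_ge_0).
    pose proof (Rpower_gt_0 (japan (Z_enum n)) q).
    apply Rmult_le_compat; try apply rpow_ge_0; [apply rpow_le_Rpower; auto; lra |].
    eapply Rle_trans; [apply rpow_le_Rpower; [apply B_le | apply Rmult_lt_0_compat | lra]; auto |].
    rewrite <- Rpower_mult_distr, Rpower_mult, (Rmult_comm q) by auto. apply Rle_refl.
  - apply (ex_series_scal_l (K := R_AbsRing) (V := R_NormedModule)).
    apply (ex_series_scal_l (K := R_AbsRing) (V := R_NormedModule)).
    now apply ex_series_japan_Rpower, Z_enum_growth.
Qed.

Theorem corollary3p7 (r s w rho delta m : R) (a : R -> Z -> C) :
  0 < r <= 1 -> 0 < s < 1 -> 0 < w < 1 ->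
  0 <= rho <= 1 -> 0 <= delta <= 1 ->
  symbol_class m rho delta a ->
  m < - (1 / r) - w - 2 * delta ->
  r_nuclear r s w (Top a).
Proof.
  intros r_bounds s_bounds w_bounds _ delta_bounds a_symbol m_lt.
  assert (rq_lt : r * (m + w) < -1).
  { replace (-1) with (r * - (1 / r)) by (field; lra).
    apply Rmult_lt_compat_l; lra. }
  assert (q_lt : m + w < -1) by nra.
  destruct (symbol_mode_estimates m rho delta a a_symbol (proj2 delta_bounds) w)
    as [K [K_gt0 mode_bounds]]; [lra |].
  destruct a_symbol as [a_periodic _].
  assert (modes_holder : forall xi, in_holder w (symbol_mode a xi) /\
            holder_norm w (symbol_mode a xi) <= 2 * K * Rpower (japan xi) (m + w))
    by (intros xi; apply symbol_mode_in_holder; auto; apply mode_bounds).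
  split.
  { intros u u_holder. apply (Top_in_holder a (m + w) K s w u); auto; try lra; apply mode_bounds. }
  exists (fun n u => fourier u (Z_enum n)), (fun n => symbol_mode a (Z_enum n)).
  split; [intros n; apply fourier_in_dual; lra |].
  split; [intros n; apply modes_holder |].
  split.
  - apply (ex_series_nuclear_weights _ _ r (m + w) (2 * K + 1)); try lra; intros n.
    + pose proof (fourier_in_dual s (Z_enum n) (proj1 s_bounds)). lra.
    + pose proof (Rpower_gt_0 (japan (Z_enum n)) (m + w)).
      pose proof (modes_holder (Z_enum n)). nra.
  - intros u u_holder.
    apply (Top_expansion a (m + w) K s w u); auto; try lra; apply mode_bounds.
Qed.
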